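(* Let $(M,d)$ be a metric space, $\mathsf{P}\subseteq M$ a set of $n$ points, $1\le\ell\le k\le n$ integers, $m=\lfloor k/\ell\rfloor$, $c\ge1$. Let $Q=\{q_1,\dots,q_m\}\subseteq\mathsf{P}$ satisfy $\max_{p\in\mathsf{P}} d_Q(p,1)\le c\,r_{\mathrm{cen}}$, where $r_{\mathrm{cen}}=\min_{S\subseteq\mathsf{P},|S|=m}\max_{p\in\mathsf{P}} d_S(p,1)$. Let $C\subseteq\mathsf{P}$ with $|C|=k$ and $C\supseteq\bigcup_{i=1}^m N_{\mathsf{P}}(q_i,\ell)$, and let $r_{\mathrm{alg}}=\max_{p\in\mathsf{P}} d_C(p,\ell)$, $r_{\mathrm{opt}}=\min_{C'\subseteq\mathsf{P},|C'|=k}\max_{p\in\mathsf{P}} d_{C'}(p,\ell)$. Then $r_{\mathrm{alg}}\le r_{\mathrm{opt}}+2c\,r_{\mathrm{cen}}$.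
   Context: For a finite set $S\subseteq M$, a point $p\in M$ and an integer $1\le i\le|S|$, $d_S(p,i)$ denotes the radius of the smallest closed ball centered at $p$ containing at least $i$ points of $S$. Nearest neighbors are ordered lexicographically by $(d(p,s),\text{index of }s)$; $N_S(p,i)$ is the set of the first $i$ points of $S$ in this order, $|N_S(p,i)|=i$. *)

From HB Require Import structures.
From mathcomp Require Import all_boot all_order all_algebra.
Set Implicit Arguments. Unset Strict Implicit. Unset Printing Implicit Defensive.
Import Order.TTheory GRing.Theory Num.Theory.
Local Open Scope ring_scope.

(* The point set P is given as an injective family pts : 'I_n -> M; the
   index of pts s is the ordinal s.  Subsets of P are {set 'I_n}. *)

Definition ball_card (R : realFieldType) (M : Type) (n : nat)
  (d : M -> M -> R) (pts : 'I_n -> M) (S : {set 'I_n}) (p : M) (r : R) : nat :=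
  #|[set s in S | d p (pts s) <= r]|.

(* d_S(p,i): smallest radius of a closed ball around p containing at least i
   points of S.  The smallest such radius is always the distance from p to a
   point of S, so we take the minimum over those candidate radii. *)
Definition dS (R : realFieldType) (M : Type) (n : nat)
  (d : M -> M -> R) (pts : 'I_n -> M) (S : {set 'I_n}) (p : M) (i : nat) : R :=
  let cand := [seq d p (pts s) | s <- enum S &
                (i <= ball_card d pts S p (d p (pts s)))%N] in
  \big[Order.min/head 0 cand]_(x <- cand) x.

Definition lexlt (R : realFieldType) (M : Type) (n : nat)
  (d : M -> M -> R) (pts : 'I_n -> M) (p : M) (t s : 'I_n) : bool :=
  (d p (pts t) < d p (pts s)) ||
  ((d p (pts t) == d p (pts s)) && (nat_of_ord t < nat_of_ord s)%N).

Definition NN (R : realFieldType) (M : Type) (n : nat)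
  (d : M -> M -> R) (pts : 'I_n -> M) (S : {set 'I_n}) (p : M) (i : nat)
  : {set 'I_n} :=
  [set s in S | (#|[set t in S | lexlt d pts p t s]| < i)%N].

(* max_{p in P} d_S(p,i)  (all values are >= 0, so 0 is a neutral start) *)
Definition radius (R : realFieldType) (M : Type) (n : nat)
  (d : M -> M -> R) (pts : 'I_n -> M) (S : {set 'I_n}) (i : nat) : R :=
  \big[Order.max/0]_(p < n) dS d pts S (pts p) i.

(* minimum of a nonnegative f over the (nonempty) family {x | P x};
   the start value is the maximum over the same family, so it does not
   affect the minimum when the family is nonempty. *)
Definition fmin (R : realFieldType) (T : finType) (P : pred T) (f : T -> R) : R :=
  \big[Order.min/(\big[Order.max/0]_(x | P x) f x)]_(x | P x) f x.

Definition r_cen (R : realFieldType) (M : Type) (n : nat)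
  (d : M -> M -> R) (pts : 'I_n -> M) (m : nat) : R :=
  fmin (fun S : {set 'I_n} => #|S| == m) (fun S => radius d pts S 1).

Definition r_opt (R : realFieldType) (M : Type) (n : nat)
  (d : M -> M -> R) (pts : 'I_n -> M) (k l : nat) : R :=
  fmin (fun S : {set 'I_n} => #|S| == k) (fun S => radius d pts S l).

From HB Require Import structures.
From mathcomp Require Import all_boot all_order all_algebra.
From mathcomp Require Import lra.
Import Order.TTheory GRing.Theory Num.Theory.
Local Open Scope ring_scope.

(* Proof of the approximation bound r_alg <= r_opt + 2 c r_cen; in fact we
   prove the sharper r_alg <= r_opt + c r_cen.
   Fix p in P.  Since Q is a c-approximate m-center solution, p has a center
   q in Q with d(p,q) <= c r_cen.  An optimal solution C_opt has at least l
   points in the ball B(q, r_opt), so the first l points of P in the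
   (distance, index) order around q, namely N_P(q,l), all lie in B(q, r_opt).
   These l points belong to C, and by the triangle inequality they lie in
   B(p, c r_cen + r_opt); hence d_C(p,l) <= c r_cen + r_opt. *)

Lemma bigmin_mem {disp : Order.disp_t} {T : orderType disp} (x0 : T)
    (s : seq T) :
  \big[Order.min/x0]_(x <- s) x \in x0 :: s.
Proof.
elim: s => [|a s IH]; first by rewrite big_nil mem_head.
rewrite big_cons minElt; case: ifP => _; first by rewrite !inE eqxx orbT.
by move: IH; rewrite !inE => /orP[->|->]; rewrite ?orbT.
Qed.

Lemma card_ord_lt (N l : nat) : (l <= N)%N -> #|[set j : 'I_N | (j < l)%N]| = l.
Proof.
move=> lN.
have -> : [set j : 'I_N | (j < l)%N] = [set widen_ord lN j | j : 'I_l].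
  apply/setP => j; rewrite inE; apply/idP/imsetP.
    by move=> jl; exists (Ordinal jl) => //; apply: val_inj.
  by case=> j' _ ->; rewrite /= ltn_ord.
by rewrite card_imset ?card_ord // => a b /(congr1 val) /= /val_inj.
Qed.

Section FiniteMinimum.
Context {R : realFieldType} {T : finType} (P : pred T) (f : T -> R).

Lemma fmin_attained (x0 : T) : P x0 -> exists2 x, P x & fmin P f = f x.
Proof.
move=> Px0; have [x Px min_x] := eq_bigmin x0 P f Px0 (fun x Px =>
  le_bigmax_cond 0 f Px); by exists x.
Qed.

Lemma fmin_ge0 : (forall x, P x -> 0 <= f x) -> 0 <= fmin P f.
Proof. by move=> f_ge0; apply: le_bigmin => //; exact: bigmax_ge_id. Qed.

End FiniteMinimum.

Section BallRadius.
Context {R : realFieldType} {M : Type} (d : M -> M -> R) {n : nat}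
  (pts : 'I_n -> M).
Hypothesis d_ge0 : forall x y, 0 <= d x y.

Local Notation ball_card := (ball_card d pts).
Local Notation dS := (dS d pts).

Lemma ball_card_le (S S' : {set 'I_n}) p r r' :
  S \subset S' -> r <= r' -> (ball_card S p r <= ball_card S' p r')%N.
Proof.
move=> /subsetP SS' rr'; apply: subset_leq_card; apply/subsetP => t.
by rewrite !inE => /andP[/SS' -> h]; exact: le_trans h rr'.
Qed.

Lemma ball_card_full (S : {set 'I_n}) p : exists r, ball_card S p r = #|S|.
Proof.
exists (\big[Order.max/0]_(t in S) d p (pts t)).
rewrite /ball_card (_ : [set s in S | _] = S) //.
apply/setP => t; rewrite inE andb_idr // => tS.
exact: (le_bigmax_cond 0 (fun t => d p (pts t)) tS).
Qed.

(* If the ball of radius r around p holds i > 0 points of S, the farthest of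
   them, s, gives a candidate radius for d_S(p,i): the ball of radius d(p,s)
   still holds those i points. *)
Lemma farthest_in_ball {S : {set 'I_n}} {p i r} :
    (0 < i)%N -> (i <= ball_card S p r)%N ->
  exists2 s, s \in S & d p (pts s) <= r /\ (i <= ball_card S p (d p (pts s)))%N.
Proof.
move=> i_gt0 hr; set B := [set s in S | d p (pts s) <= r].
have /card_gt0P [s0 Bs0] : (0 < #|B|)%N by apply: leq_trans hr.
have [s Bs max_s] := eq_bigmax s0 (mem B) (fun t => d p (pts t)) Bs0
  (fun t _ => d_ge0 p (pts t)).
move: (Bs); rewrite inE => /andP[sS hsr].
exists s => //; split=> //; apply: (leq_trans hr); apply: subset_leq_card.
apply/subsetP => t Bt; move: (Bt); rewrite !inE => /andP[-> _] /=.
by rewrite -max_s; exact: (le_bigmax_cond 0 (fun t => d p (pts t)) Bt).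
Qed.

Lemma dS_le_cand {S : {set 'I_n}} {p i s} : s \in S ->
  (i <= ball_card S p (d p (pts s)))%N -> dS S p i <= d p (pts s).
Proof.
by move=> sS hs; apply: ge_bigmin_seq => //; apply: map_f;
  rewrite mem_filter hs mem_enum.
Qed.

Lemma dS_attained {S : {set 'I_n}} {p i s} : s \in S ->
  (i <= ball_card S p (d p (pts s)))%N -> (i <= ball_card S p (dS S p i))%N.
Proof.
move=> sS hs; rewrite /dS /=.
set cand := [seq _ | _ <- _ & _].
have : d p (pts s) \in cand by apply: map_f; rewrite mem_filter hs mem_enum.
case E : cand => [//|a c] _.
have := bigmin_mem a (a :: c); rewrite /= in_cons orbA orbb -in_cons -E.
by case/mapP => t; rewrite mem_filter => /andP[ht _] ->.
Qed.

Lemma dS_le (S : {set 'I_n}) p i r : (0 < i)%N ->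
  (i <= ball_card S p r)%N -> dS S p i <= r.
Proof.
move=> i_gt0 hr; have [s sS [hsr hs]] := farthest_in_ball i_gt0 hr.
exact: le_trans (dS_le_cand sS hs) hsr.
Qed.

Lemma dS_ball (S : {set 'I_n}) p i : (0 < i)%N -> (i <= #|S|)%N ->
  (i <= ball_card S p (dS S p i))%N.
Proof.
move=> i_gt0 iS; have [r hr] := ball_card_full S p.
have [s sS [_ hs]] : exists2 s, s \in S &
    d p (pts s) <= r /\ (i <= ball_card S p (d p (pts s)))%N.
  by apply: farthest_in_ball; rewrite ?hr.
exact: dS_attained sS hs.
Qed.

Lemma nearest_point (S : {set 'I_n}) p : (0 < #|S|)%N ->
  exists2 q, q \in S & d p (pts q) <= dS S p 1.
Proof.
move=> S_gt0; have /card_gt0P [q] := dS_ball S p 1 isT S_gt0.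
by rewrite inE => /andP[qS hq]; exists q.
Qed.

Lemma dS_le_radius (S : {set 'I_n}) i p : dS S (pts p) i <= radius d pts S i.
Proof. exact: (le_bigmax 0 (fun p => dS S (pts p) i)). Qed.

Lemma radius_ge0 (S : {set 'I_n}) i : 0 <= radius d pts S i.
Proof. exact: bigmax_ge_id. Qed.

End BallRadius.

Section Neighbourhood.
Context {R : realFieldType} {M : Type} (d : M -> M -> R) {n : nat}
  (pts : 'I_n -> M) (x : M).

Local Notation lt := (lexlt d pts x).

Lemma lexlt_irr s : ~~ lt s s.
Proof. by rewrite /lexlt ltxx ltnn andbF. Qed.

Lemma lexlt_trans a b c : lt a b -> lt b c -> lt a c.
Proof.
rewrite /lexlt => /orP[h1|/andP[/eqP e1 h1]] /orP[h2|/andP[/eqP e2 h2]].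
- by rewrite (lt_trans h1 h2).
- by rewrite -e2 h1.
- by rewrite e1 h2.
- by rewrite e1 e2 eqxx (ltn_trans h1 h2) orbT.
Qed.

Lemma lexlt_total a b : a != b -> lt a b || lt b a.
Proof.
move=> ab; rewrite /lexlt; case: ltgtP => //= _.
by rewrite -val_eqE /= in ab; rewrite -neq_ltn.
Qed.

Definition rank (S : {set 'I_n}) (s : 'I_n) : nat := #|[set t in S | lt t s]|.

Lemma rank_le_card (S : {set 'I_n}) s : (rank S s <= #|S|)%N.
Proof.
by apply: subset_leq_card; apply/subsetP => t; rewrite inE => /andP[].
Qed.

Lemma rank_lt (S : {set 'I_n}) a b :
  a \in S -> lt a b -> (rank S a < rank S b)%N.
Proof.
move=> aS ab; apply: proper_card; apply/properP; split.
  apply/subsetP => t; rewrite !inE => /andP[-> /lexlt_trans]; exact.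
by exists a; rewrite !inE aS ?ab ?lexlt_irr.
Qed.

Lemma rank_inj (S : {set 'I_n}) : {in S &, injective (rank S)}.
Proof.
move=> a b aS bS e; apply/eqP; apply/negPn/negP => /lexlt_total /orP[].
- by move/(rank_lt _ _ _ aS); rewrite e ltnn.
- by move/(rank_lt _ _ _ bS); rewrite e ltnn.
Qed.

Lemma rank_lt_card (S : {set 'I_n}) s : s \in S -> (rank S s < #|S|)%N.
Proof.
move=> sS; apply: proper_card; apply/properP; split.
  by apply/subsetP => t; rewrite inE => /andP[].
by exists s; rewrite // inE (negbTE (lexlt_irr s)) andbF.
Qed.

(* The ranks of the points of S are exactly 0, ..., #|S|-1, so N_S(x,l)
   has at least l elements when S does. *)
Lemma NN_card (S : {set 'I_n}) l :
  (l <= #|S|)%N -> (l <= #|NN d pts S x l|)%N.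
Proof.
move=> lS.
have Sn : (#|S| <= n)%N by rewrite -[X in (_ <= X)%N](card_ord n) max_card.
pose f s : 'I_n.+1 := inord (rank S s).
have rankK s : nat_of_ord (f s) = rank S s.
  by rewrite inordK // ltnS (leq_trans (rank_le_card S s)).
have f_inj : {in S &, injective f}.
  by move=> a b aS bS /(congr1 val); rewrite /= !rankK; exact: rank_inj.
have imS : f @: S = [set j : 'I_n.+1 | (j < #|S|)%N].
  apply/setP/subset_cardP.
    by rewrite card_in_imset // card_ord_lt // leqW.
  by apply/subsetP => _ /imsetP[s sS ->]; rewrite inE rankK rank_lt_card.
suff : [set j : 'I_n.+1 | (j < l)%N] \subset f @: NN d pts S x l.
  move/subset_leq_card; rewrite card_ord_lt; last exact: leqW (leq_trans lS Sn).
  by move/leq_trans; apply; exact: leq_imset_card.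
apply/subsetP => j; rewrite inE => jl.
have : j \in f @: S by rewrite imS inE (leq_trans jl lS).
case/imsetP => s sS def_j; rewrite def_j imset_f // inE sS /=.
by rewrite def_j rankK in jl.
Qed.

Lemma NN_sub_ball (S : {set 'I_n}) l r : (l <= ball_card d pts S x r)%N ->
  NN d pts S x l \subset [set s in S | d x (pts s) <= r].
Proof.
move=> hr; apply/subsetP => s; rewrite !inE => /andP[-> rank_s] /=.
rewrite leNgt; apply/negP => far_s.
move: rank_s; rewrite ltnNge => /negP; apply.
apply: (leq_trans hr); apply: subset_leq_card; apply/subsetP => t.
by rewrite !inE => /andP[-> ht] /=; rewrite /lexlt (le_lt_trans ht far_s).
Qed.

End Neighbourhood.

Section Transfer.
Context {R : realFieldType} {M : Type} (d : M -> M -> R) {n : nat}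
  (pts : 'I_n -> M).
Hypothesis d_ge0 : forall x y, 0 <= d x y.
Hypothesis d_tri : forall x y z, d x z <= d x y + d y z.

Local Notation NP q l := (NN d pts [set: 'I_n] (pts q) l).

Lemma NN_within_radius (S' : {set 'I_n}) q l : (0 < l)%N -> (l <= #|S'|)%N ->
  {in NP q l, forall s, d (pts q) (pts s) <= radius d pts S' l}.
Proof.
move=> l_gt0 lS' s Ns.
have sub_ball :
    (l <= ball_card d pts [set: 'I_n] (pts q) (radius d pts S' l))%N.
  apply: leq_trans (dS_ball d pts d_ge0 S' (pts q) l l_gt0 lS') _.
  exact: ball_card_le (subsetT S') (dS_le_radius d pts S' l q).
have := subsetP (NN_sub_ball d pts (pts q) _ _ _ sub_ball) s Ns.
by rewrite !inE.
Qed.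

Lemma dS_le_via_neighbour (C : {set 'I_n}) p q l e r :
    (0 < l)%N -> (l <= n)%N -> d p (pts q) <= e -> NP q l \subset C ->
    {in NP q l, forall s, d (pts q) (pts s) <= r} ->
  dS d pts C p l <= e + r.
Proof.
move=> l_gt0 ln pq NC Nr; apply: (dS_le d pts d_ge0) => //.
have lP : (l <= #|[set: 'I_n]|)%N by rewrite cardsT card_ord.
apply: leq_trans (NN_card d pts (pts q) _ _ lP) _; apply: subset_leq_card.
apply/subsetP => s Ns; rewrite inE (subsetP NC s Ns) /=.
exact: le_trans (d_tri _ (pts q) _) (lerD pq (Nr s Ns)).
Qed.

End Transfer.

(* The approximation bound. *)
Theorem claim3 (R : realFieldType) (M : Type) (d : M -> M -> R)
  (d_eq0 : forall x y, d x y = 0 <-> x = y)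
  (d_sym : forall x y, d x y = d y x)
  (d_tri : forall x y z, d x z <= d x y + d y z)
  (n : nat) (pts : 'I_n -> M) (pts_inj : injective pts)
  (l k : nat) (c : R)
  (hl : (1 <= l)%N) (hlk : (l <= k)%N) (hkn : (k <= n)%N) (hc : 1 <= c)
  (Q : {set 'I_n}) (hQ : #|Q| = (k %/ l)%N)
  (hQcen : radius d pts Q 1 <= c * r_cen d pts (k %/ l))
  (C : {set 'I_n}) (hC : #|C| = k)
  (hCN : forall q, q \in Q -> NN d pts [set: 'I_n] (pts q) l \subset C) :
  radius d pts C l <= r_opt d pts k l + 2 * c * r_cen d pts (k %/ l).
Proof.
have d_ge0 x y : 0 <= d x y.
  by have := d_tri x y x; rewrite (proj2 (d_eq0 x x) erefl) (d_sym y x); lra.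
have [Copt /eqP Copt_k ropt_def] :
    exists2 C' : {set 'I_n}, #|C'| == k & r_opt d pts k l = radius d pts C' l.
  by apply: (fmin_attained _ _ [set j : 'I_n | (j < k)%N]); rewrite card_ord_lt.
have rcen_ge0 : 0 <= r_cen d pts (k %/ l).
  by apply: fmin_ge0 => S _; exact: radius_ge0.
have c_rcen_ge0 : 0 <= c * r_cen d pts (k %/ l) by apply: mulr_ge0 => //; lra.
have Q_gt0 : (0 < #|Q|)%N by rewrite hQ divn_gt0.
have Copt_l : (l <= #|Copt|)%N by rewrite Copt_k.
apply: bigmax_le => [|p _]; first by have := radius_ge0 d pts Copt l; lra.
have [q qQ pq] := nearest_point d pts d_ge0 Q (pts p) Q_gt0.
have pq_cen : d (pts p) (pts q) <= c * r_cen d pts (k %/ l).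
  exact: le_trans pq (le_trans (dS_le_radius d pts Q 1 p) hQcen).
have q_opt := NN_within_radius d pts d_ge0 Copt q l hl Copt_l.
have := dS_le_via_neighbour d pts d_ge0 d_tri C (pts p) q l _ _ hl
  (leq_trans hlk hkn) pq_cen (hCN q qQ) q_opt.
by rewrite ropt_def; lra.
Qed.
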